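(* Let $d\ge 1$ be an integer and, for $t\ge 0$, let $N_t$ be the number of vertices of the $t$-iterated line digraph $L^t(CK(d,4))$. Then $$N_t=\alpha\left(\frac{d-1+\sqrt{d^2-2d+5}}{2}\right)^t+\beta\left(\frac{d-1-\sqrt{d^2-2d+5}}{2}\right)^t,$$ where $\alpha=\frac12 d(d+1)\left(d^2-d+1+\frac{d^3-2d^2+4d-1}{\sqrt{d^2-2d+5}}\right)$ and $\beta=\frac12 d(d+1)\left(d^2-d+1-\frac{d^3-2d^2+4d-1}{\sqrt{d^2-2d+5}}\right)$. Moreover, if $d=2$, then $N_0=18$, $N_1=30$ and $N_t=N_{t-1}+N_{t-2}$ for all $t\ge 2$.
   Context: Let $\Sigma=\{0,1,\dots,d\}$. The cyclic Kautz digraph $CK(d,\ell)$ has as vertices all sequences $a_1\ldots a_\ell\in\Sigma^\ell$ with $a_i\neq a_{i+1}$ for $1\le i\le \ell-1$ and $a_1\neq a_\ell$, with an arc from $a_1\ldots a_\ell$ to $b_1\ldots b_\ell$ iff both are vertices and $b_i=a_{i+1}$ for $1\le i\le\ell-1$. The line digraph $L(G)$ of a digraph $G$ has as vertices the arcs of $G$, with an arc from $(u,v)$ to $(v',w)$ iff $v'=v$. $L^0(G)=G$ and $L^t(G)=L(L^{t-1}(G))$. *)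

From HB Require Import structures.
From mathcomp Require Import all_boot all_order all_algebra.
From mathcomp Require Import reals.
Set Implicit Arguments. Unset Strict Implicit. Unset Printing Implicit Defensive.

Record digraph := Digraph { dvert : finType; darc : rel dvert }.

Definition line_vert (G : digraph) : finType :=
  {p : dvert G * dvert G | @darc G p.1 p.2}.

Definition line_arc (G : digraph) : rel (line_vert G) :=
  fun p q => (val p).2 == (val q).1.

Definition line_digraph (G : digraph) : digraph :=
  @Digraph (line_vert G) (@line_arc G).

Definition iter_line (t : nat) (G : digraph) : digraph := iter t line_digraph G.

(* Cyclic Kautz digraph CK(d,l): alphabet {0,...,d} = 'I_(d+1); a vertex is a
   sequence a_1...a_l (0-indexed here) with a_i <> a_{i+1} and a_1 <> a_l. *)
Definition ck_ok (d l : nat) (a : l.-tuple 'I_d.+1) : bool :=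
  [forall i : 'I_l, (i.+1 < l) ==> (nth ord0 a i != nth ord0 a i.+1)]
  && (nth ord0 a 0 != nth ord0 a l.-1).

Definition ck_vert (d l : nat) : finType := {a : l.-tuple 'I_d.+1 | ck_ok a}.

Definition ck_arc (d l : nat) : rel (ck_vert d l) :=
  fun a b => [forall i : 'I_l, (i.+1 < l) ==>
                (nth ord0 (val b) i == nth ord0 (val a) i.+1)].

Definition CK (d l : nat) : digraph := @Digraph (ck_vert d l) (@ck_arc d l).

Definition Nt (d t : nat) : nat := #|dvert (iter_line t (CK d 4))|.

From mathcomp Require Import all_boot all_order all_algebra ring lra.
From mathcomp Require Import reals.
Set Implicit Arguments. Unset Strict Implicit. Unset Printing Implicit Defensive.

(* The vertices of L^t(G) are the walks of length t in G.  In CK(d,4) the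
   number of such walks starting at a_0a_1a_2a_3 only depends on whether
   a_1 = a_3, and the two possible values evolve by the matrix
   [[1, d-1], [1, d-2]], whose characteristic polynomial is x^2 - (d-1)x - 1.
   There are (d+1)d^2 vertices with a_1 = a_3 and (d+1)d(d-1)^2 others, so
   N_{t+2} = (d-1) N_{t+1} + N_t, and the closed form follows from N_0, N_1
   and the roots (d - 1 +- sqrt(d^2 - 2d + 5))/2. *)

Fixpoint nwalks (G : digraph) (t : nat) (v : dvert G) : nat :=
  if t is t'.+1 then \sum_(w | darc v w) nwalks t' w else 1.
Arguments nwalks : clear implicits.

Lemma sum_line_vert (G : digraph) (F : dvert G -> dvert G -> nat) :
  \sum_(p : line_vert G) F (val p).1 (val p).2 = \sum_u \sum_(w | darc u w) F u w.
Proof.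
by rewrite pair_big_dep -(big_sub [pred p | darc p.1 p.2] (fun p => F p.1 p.2)).
Qed.

Lemma nwalks_line (G : digraph) t (p : line_vert G) :
  nwalks (line_digraph G) t p = nwalks G t (val p).2.
Proof.
elim: t p => [//|t IHt] p /=.
under eq_bigr => q _ do rewrite IHt.
rewrite big_mkcond /=.
rewrite (sum_line_vert (fun u w => if (val p).2 == u then nwalks G t w else 0)).
rewrite (bigD1 (val p).2) //= eqxx [X in _ + X]big1 ?addn0 // => u neq_u.
by rewrite big1 // => w _; rewrite eq_sym (negbTE neq_u).
Qed.

Lemma card_iter_line t (G : digraph) :
  #|dvert (iter_line t G)| = \sum_v nwalks G t v.
Proof.
elim: t G => [|t IHt] G; first by rewrite /= sum1_card.
rewrite /iter_line iterSr -/(iter_line t _) IHt.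
under eq_bigr => p _ do rewrite nwalks_line.
exact: (sum_line_vert (fun u w => nwalks G t w)).
Qed.

Lemma sum_tupleS (T : finType) n (F : n.+1.-tuple T -> nat) :
  \sum_(a : n.+1.-tuple T) F a = \sum_x \sum_(b : n.-tuple T) F [tuple of x :: b].
Proof.
rewrite pair_big /= (reindex (fun p : T * n.-tuple T => [tuple of p.1 :: p.2])) //.
exists (fun a : n.+1.-tuple T => (thead a, [tuple of behead a])).
  by move=> [x b] _; congr pair; apply: val_inj.
by move=> [[|x s] //= sz] _; apply: val_inj.
Qed.

Lemma sum_tuple4 (T : finType) (F : 4.-tuple T -> nat) :
  \sum_(a : 4.-tuple T) F a = \sum_x0 \sum_x1 \sum_x2 \sum_x3 F [tuple x0; x1; x2; x3].
Proof.
do 4![rewrite sum_tupleS; apply: eq_bigr => ? _].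
rewrite (big_pred1 [tuple]) => [|b]; last by apply/esym/eqP; exact: tuple0.
by congr F; apply: val_inj.
Qed.

Lemma sum_eqb_in (T : finType) (A : {set T}) (c : T) (G : bool -> nat) :
  c \in A -> \sum_(x in A) G (c == x) = G true + #|A :\ c| * G false.
Proof.
move=> cA; rewrite (bigD1 c) //= eqxx -sum_nat_const; congr (_ + _).
apply: eq_big => [x|x /andP[_ /negbTE]]; first by rewrite !inE andbC.
by rewrite eq_sym => ->.
Qed.

Section CyclicKautz4.
Variable d : nat.
Local Notation T := 'I_d.+1.
(* In nat_scope, so that it is not shadowed by [nth 0] inside [\sum] bodies. *)
Local Notation "a `_ i" := (nth ord0 (a : seq T) i) : nat_scope.

Lemma ck_ok4 (a : 4.-tuple T) :
  ck_ok a = (a`_0 \in ~: [set a`_1; a`_3]) && (a`_2 \in ~: [set a`_1; a`_3]).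
Proof.
rewrite /ck_ok !inE !negb_or.
apply/andP/and3P => [[/forallP a_ok ne03]|[/andP[ne01 ne03] ne21 ne23]].
  move: (a_ok (@Ordinal 4 0 isT)) (a_ok (@Ordinal 4 1 isT)) (a_ok (@Ordinal 4 2 isT)).
  by rewrite /= => -> ne12 ->; split; rewrite // eq_sym.
split=> //; apply/forallP => -[[|[|[|[|i]]]] //= _]; by rewrite eq_sym.
Qed.

Lemma ck_arc4 (v w : ck_vert d 4) :
  ck_arc v w =
  [&& (val w)`_0 == (val v)`_1, (val w)`_1 == (val v)`_2 & (val w)`_2 == (val v)`_3].
Proof.
apply/forallP/and3P => [w_succ|[? ? ?] [[|[|[|[|i]]]] //]].
by move: (w_succ (@Ordinal 4 0 isT)) (w_succ (@Ordinal 4 1 isT))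
          (w_succ (@Ordinal 4 2 isT)).
Qed.

Lemma sum_ck4 (F : 4.-tuple T -> nat) :
  \sum_(v : ck_vert d 4) F (val v) =
  \sum_x0 \sum_x1 \sum_x2 \sum_x3
    (if (x0 \in ~: [set x1; x3]) && (x2 \in ~: [set x1; x3])
     then F [tuple x0; x1; x2; x3] else 0).
Proof.
rewrite -(big_sub [pred a | ck_ok a] F) big_mkcond sum_tuple4.
by do 4!apply: eq_bigr => ? _; rewrite inE ck_ok4.
Qed.

Definition ck_type (v : ck_vert d 4) : bool := (val v)`_1 == (val v)`_3.

Lemma card_setC2 (a b : T) : #|~: [set a; b]| = if a == b then d else d.-1.
Proof.
rewrite cardsCs setCK card_ord cards2 eq_sym.
by case: eqP => _ /=; rewrite ?subn1 ?subn2.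
Qed.

Lemma sum_ck_succ (v : ck_vert d 4) (F : 4.-tuple T -> nat) :
  \sum_(w | ck_arc v w) F (val w) =
  \sum_(x in ~: [set (val v)`_1; (val v)`_3])
     F [tuple (val v)`_1; (val v)`_2; (val v)`_3; x].
Proof.
move: (valP v); rewrite ck_ok4 !inE !negb_or.
set a1 := (val v)`_1; set a2 := (val v)`_2; set a3 := (val v)`_3.
move=> /andP[_ /andP[ne21 ne23]].
rewrite big_mkcond /=.
under eq_bigr => w _ do rewrite ck_arc4 -/a1 -/a2 -/a3.
rewrite (sum_ck4 (fun b =>
  if [&& b`_0 == a1, b`_1 == a2 & b`_2 == a3] then F b else 0)) /=.
rewrite (big_only1 a1) // => [|x0 ne _]; last first.
  by do 3!rewrite big1 // => ? _; rewrite (negbTE ne) /= if_same.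
rewrite (big_only1 a2) // => [|x1 ne _]; last first.
  by do 2!rewrite big1 // => ? _; rewrite (negbTE ne) /= ?andbF if_same.
rewrite (big_only1 a3) // => [|x2 ne _]; last first.
  by rewrite big1 // => ? _; rewrite (negbTE ne) /= ?andbF if_same.
rewrite !eqxx [RHS]big_mkcond; apply: eq_bigr => x _.
by rewrite !inE !negb_or ![_ == a2]eq_sym ne21 ne23 (eq_sym a1 x) (eq_sym a3 x).
Qed.

(* The successors of a_0a_1a_2a_3 are the a_1a_2a_3x with x \notin {a_1, a_3},
   and x = a_2 is the only one with [ck_type] true. *)
Fixpoint ck_walks (t : nat) (b : bool) : nat :=
  if t is t'.+1 then ck_walks t' true + (if b then d.-1 else d.-2) * ck_walks t' false
  else 1.

Lemma nwalks_ck t (v : ck_vert d 4) : nwalks (CK d 4) t v = ck_walks t (ck_type v).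
Proof.
elim: t v => [//|t IHt] v /=.
under eq_bigr => w _ do rewrite IHt.
rewrite (sum_ck_succ v (fun a => ck_walks t (a`_1 == a`_3))) /=.
move: (valP v); rewrite ck_ok4 => /andP[_ a2_out].
set A := ~: [set _; _] in a2_out *.
have card_out : #|A :\ (val v)`_2| = #|A|.-1.
  by rewrite [in RHS](cardsD1 (val v)`_2) a2_out.
by rewrite sum_eqb_in // card_out card_setC2 /ck_type; case: ifP.
Qed.

Lemma sum_ck_type (G : bool -> nat) :
  \sum_(v : ck_vert d 4) G (ck_type v) =
  d.+1 * (d * d * G true + d * (d.-1 * d.-1) * G false).
Proof.
have sum_out2 (x1 x3 : T) (g : nat) (A := ~: [set x1; x3]) :
    \sum_x0 \sum_x2 (if (x0 \in A) && (x2 \in A) then g else 0) = #|A| * #|A| * g.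
  rewrite -mulnA -!sum_nat_const [RHS]big_mkcond; apply: eq_bigr => x0 _.
  by case: (x0 \in A) => /=; [rewrite [RHS]big_mkcond | rewrite big1].
rewrite (sum_ck4 (fun a => G (a`_1 == a`_3))) /= exchange_big /=.
rewrite (eq_bigr (fun _ => d * d * G true + d * (d.-1 * d.-1) * G false)) => [|x1 _].
  by rewrite sum_nat_const card_ord.
under eq_bigr => x0 _ do rewrite exchange_big.
rewrite exchange_big /=; under eq_bigr => x3 _ do rewrite sum_out2 card_setC2.
rewrite (bigD1 x1) //= eqxx; congr (_ + _).
rewrite (eq_bigr (fun _ => d.-1 * d.-1 * G false)) => [|x3 /negbTE ne]; last first.
  by rewrite eq_sym ne.
by rewrite sum_nat_const cardC1 card_ord mulnA.
Qed.

End CyclicKautz4.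

Lemma Nt_walks d t :
  Nt d t = d.+1 * (d * d * ck_walks d t true + d * (d.-1 * d.-1) * ck_walks d t false).
Proof. by rewrite /Nt card_iter_line (eq_bigr _ (fun v _ => nwalks_ck t v)) sum_ck_type. Qed.

Lemma Nt0 d : Nt d 0 = d.+1 * (d * d + d * (d.-1 * d.-1)).
Proof. by rewrite Nt_walks /= !muln1. Qed.

Lemma Nt1 d : 0 < d -> Nt d 1 = d.+1 * (d * d * d + d * (d.-1 * d.-1) * d.-1).
Proof. by case: d => [|[|k]] // _; rewrite Nt_walks /= ?muln0 // !muln1 add1n. Qed.

Lemma Nt_rec d t : 0 < d -> Nt d t.+2 = d.-1 * Nt d t.+1 + Nt d t.
Proof. by case: d => [|[|k]] // _; rewrite !Nt_walks /=; ring. Qed.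

Import GRing.Theory Num.Theory.
Local Open Scope ring_scope.

Lemma linrec2_closed_form (R : comRingType) (c1 c0 r1 r2 a b : R) (u : nat -> R) :
    r1 ^+ 2 = c1 * r1 + c0 -> r2 ^+ 2 = c1 * r2 + c0 ->
    (forall t, u t.+2 = c1 * u t.+1 + c0 * u t) ->
    u 0%N = a + b -> u 1%N = a * r1 + b * r2 ->
  forall t, u t = a * r1 ^+ t + b * r2 ^+ t.
Proof.
move=> r1_root r2_root u_rec u0 u1.
have pow_rec r t : r ^+ 2 = c1 * r + c0 -> r ^+ t.+2 = c1 * r ^+ t.+1 + c0 * r ^+ t.
  by move=> r_root; rewrite -addn2 exprD r_root exprSr; ring.
suff u_pair t : u t = a * r1 ^+ t + b * r2 ^+ t /\ u t.+1 = a * r1 ^+ t.+1 + b * r2 ^+ t.+1.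
  by move=> t; case: (u_pair t).
elim: t => [|t [IHt IHt1]]; first by rewrite !expr0 !expr1 !mulr1.
by split=> //; rewrite u_rec IHt1 IHt (pow_rec r1) // (pow_rec r2) //; ring.
Qed.

Lemma half_sum_root (F : fieldType) (c s : F) :
  2 != 0 :> F -> s ^+ 2 = c ^+ 2 + 4 -> ((c + s) / 2) ^+ 2 = c * ((c + s) / 2) + 1.
Proof.
move=> two_neq0 s2; apply/eqP; rewrite -subr_eq0.
have -> : ((c + s) / 2) ^+ 2 - (c * ((c + s) / 2) + 1) = (s ^+ 2 - (c ^+ 2 + 4)) / 4.
  by field; rewrite two_neq0 andbT -[4]/(2 * 2)%:R natrM mulf_neq0.
by rewrite s2 subrr mul0r.
Qed.

Theorem proposition3 (R : realType) (d : nat) (hd : (1 <= d)%N) :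
  let D : R := d%:R in
  let s : R := Num.sqrt (D ^+ 2 - 2 * D + 5) in
  let alpha : R := 2^-1 * D * (D + 1) *
        (D ^+ 2 - D + 1 + (D ^+ 3 - 2 * D ^+ 2 + 4 * D - 1) / s) in
  let beta : R := 2^-1 * D * (D + 1) *
        (D ^+ 2 - D + 1 - (D ^+ 3 - 2 * D ^+ 2 + 4 * D - 1) / s) in
  (forall t : nat,
     (Nt d t)%:R = alpha * ((D - 1 + s) / 2) ^+ t + beta * ((D - 1 - s) / 2) ^+ t)
  /\ (d = 2%N ->
      [/\ Nt d 0 = 18%N, Nt d 1 = 30%N &
          forall t : nat, (2 <= t)%N -> Nt d t = (Nt d t.-1 + Nt d t.-2)%N]).
Proof.
move=> D s alpha beta; split; last first.
  move=> d2; subst d; split; [by rewrite Nt0 | by rewrite Nt1 |].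
  by case=> [|[|t]] // _; rewrite Nt_rec //= mul1n.
have D1 : (d.-1)%:R = D - 1 by rewrite /D -{2}(prednK hd) -natr1 addrK.
have s2 : s ^+ 2 = (D - 1) ^+ 2 + 4 by rewrite sqr_sqrtr; [ring | nra].
have s_neq0 : s != 0 by rewrite -sqrf_eq0 s2 lt0r_neq0 // ltr_pwDr // sqr_ge0.
apply: (linrec2_closed_form (c1 := D - 1) (c0 := 1)).
- by apply: half_sum_root; rewrite ?pnatr_eq0.
- by apply: half_sum_root; rewrite ?pnatr_eq0 ?sqrrN.
- by move=> t; rewrite Nt_rec // natrD natrM D1 mul1r.
- rewrite Nt0 -addn1 !(natrM, natrD) D1 -/D /alpha /beta.
  by field; exact: s_neq0.
- rewrite Nt1 // -addn1 !(natrM, natrD) D1 -/D /alpha /beta.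
  by field; exact: s_neq0.
Qed.
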